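(* Let $E$ and $E^c=\partial\overline{\mathcal{G}}\setminus E$ be nonempty clopen subsets of $\partial\overline{\mathcal{G}}$. Let $f:\overline{\mathcal{G}}\to\mathbb{R}$ be harmonic with $f=C\ge 0$ on $E$ and $f>C$ on $E^c$. Let $\epsilon>0$, and let $t_1,t_2$ be regular values of $f$ with: - $C<t_2<t_1<\min_{x\in E^c}f(x)$; - $d(x,E)<\epsilon$ whenever $f(x)\le t_i$, for $i=1,2$. Let $\mathcal{G}_2=f^{-1}([t_2,t_1])\cap\mathcal{G}$, regarded as a graph after subdividing edges at the (finitely many, interior to edges) points of $f^{-1}(t_1)\cup f^{-1}(t_2)$. Then $\mathcal{G}_2$ is a finite graph containing no boundary vertices of $\mathcal{G}$, and $$\sum_{v\in f^{-1}(t_1)}\partial_\nu f(v)=\sum_{v\in f^{-1}(t_2)}\partial_\nu f(v),$$ where for $v\in f^{-1}(t_i)$ the quantity $\partial_\nu f(v)$ is the derivative of $f$ at $v$ along the edge of $\mathcal{G}_{t_i}=\{f\ge t_i\}$ incident on $v$, in the direction pointing from $v$ into that edge (i.e. $v$ is regarded as a boundary vertex of $\mathcal{G}_{t_i}$).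
   Context: $\mathcal{G}$ is a connected, locally finite metric graph with countable vertex set and countable edge set. Each edge has a positive length and is identified with an interval. $\mathcal{G}$ carries the geodesic distance $d$, and $\overline{\mathcal{G}}$ is its metric completion. A designated set of vertices, containing all vertices of degree $1$, forms the boundary vertices. $\mathcal{G}_{int}$ is $\mathcal{G}$ minus the boundary vertices, and $\partial\overline{\mathcal{G}}=\overline{\mathcal{G}}\setminus\mathcal{G}_{int}$. Standing assumptions: $\overline{\mathcal{G}}$ is compact and $\partial\overline{\mathcal{G}}$ is totally disconnected. Clopen means open and closed in $\partial\overline{\mathcal{G}}$. A function $f:\overline{\mathcal{G}}\to\mathbb{R}$ is harmonic if it is continuous, linear on each edge, and satisfies $\sum_{e\sim v}\partial_\nu f_e(v)=0$ at every interior vertex $v$, where $\partial_\nu f_e(v)$ is the derivative of $f_e$ at $v$ in the direction from $v$ into the edge $e$. A point $x\in\mathcal{G}$ is a critical point of $f$ if $x$ is a vertex or $f'(x)=0$. A number is a critical value if its preimage contains a critical point. Values in the range of $f$ that are not critical values are regular values. *)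

From Stdlib Require Import Reals List ClassicalEpsilon.
Open Scope R_scope.

Record MGraph := MkMGraph {
  V : Type;
  Ed : Type;
  src : Ed -> V;            (* edge e is identified with [0, len e], 0 ~ src e *)
  tgt : Ed -> V;            (*                                   len e ~ tgt e *)
  len : Ed -> R;
  bdry : V -> Prop
}.

Arguments src {m}. Arguments tgt {m}. Arguments len {m}. Arguments bdry {m}.

Definition incident {G : MGraph} (e : Ed G) (v : V G) : Prop :=
  src e = v \/ tgt e = v.

Definition deg_one {G : MGraph} (v : V G) : Prop :=
  exists e, incident e v /\ src e <> tgt e /\
    forall e', incident e' v -> e' = e.

Inductive walk {G : MGraph} : V G -> V G -> list (Ed G) -> Prop :=
| walk_nil : forall u, walk u u nil
| walk_cons : forall u w z e l,
    ((src e = u /\ tgt e = w) \/ (src e = w /\ tgt e = u)) ->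
    walk w z l -> walk u z (e :: l).

Definition walk_len {G : MGraph} (l : list (Ed G)) : R :=
  fold_right (fun e acc => len e + acc) 0 l.

Definition countable (T : Type) : Prop :=
  exists c : T -> nat, forall x y, c x = c y -> x = y.

Definition wf_graph (G : MGraph) : Prop :=
  countable (V G) /\ countable (Ed G) /\
  (forall e : Ed G, 0 < len e) /\
  (forall v : V G, exists l : list (Ed G), forall e, incident e v -> In e l) /\
  (forall u w : V G, exists l, walk u w l) /\
  (forall v : V G, deg_one v -> bdry v).

(* GV v = vertex v ; GE e s = interior point of edge e at distance s from src e *)
Inductive gpt (G : MGraph) : Type :=
| GV : V G -> gpt G
| GE : Ed G -> R -> gpt G.
Arguments GV {G}. Arguments GE {G}.

Definition valid {G : MGraph} (p : gpt G) : Prop :=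
  match p with GV _ => True | GE e s => 0 < s < len e end.

(* points of G_int = G minus the boundary vertices *)
Definition interior_pt {G : MGraph} (p : gpt G) : Prop :=
  match p with GV v => ~ bdry v | GE _ _ => True end.

(* ways to leave a point towards a vertex, with the length travelled *)
Definition anchors {G : MGraph} (p : gpt G) : list (V G * R) :=
  match p with
  | GV v => (v, 0) :: nil
  | GE e s => (src e, s) :: (tgt e, len e - s) :: nil
  end.

Definition path_lengths {G : MGraph} (p q : gpt G) (r : R) : Prop :=
  (exists u a w b l, In (u, a) (anchors p) /\ In (w, b) (anchors q) /\
      walk u w l /\ r = a + walk_len l + b) \/
  (exists e s s', p = GE e s /\ q = GE e s' /\ r = Rabs (s - s')).

Definition is_glb (S : R -> Prop) (m : R) : Prop :=
  (forall x, S x -> m <= x) /\ (forall m', (forall x, S x -> m' <= x) -> m' <= m).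

Definition geod_dist {G : MGraph} (p q : gpt G) (r : R) : Prop :=
  is_glb (path_lengths p q) r.

Definition is_metric {X : Type} (d : X -> X -> R) : Prop :=
  (forall x y, d x y = 0 <-> x = y) /\ (forall x y, d x y = d y x) /\
  (forall x y z, d x z <= d x y + d y z).

Definition cauchy {X : Type} (d : X -> X -> R) (u : nat -> X) : Prop :=
  forall eps, 0 < eps -> exists N, forall n m, (N <= n)%nat -> (N <= m)%nat ->
    d (u n) (u m) < eps.

Definition converges {X : Type} (d : X -> X -> R) (u : nat -> X) (x : X) : Prop :=
  forall eps, 0 < eps -> exists N, forall n, (N <= n)%nat -> d (u n) x < eps.

(* (X, d) together with iota : G -> X is THE metric completion of (G, geodesic
   distance) (unique up to isometry): iota is an isometric embedding with dense
   image and X is complete. *)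
Definition is_completion {G : MGraph} {X : Type} (d : X -> X -> R)
  (iota : gpt G -> X) : Prop :=
  is_metric d /\
  (forall p q, valid p -> valid q -> geod_dist p q (d (iota p) (iota q))) /\
  (forall x eps, 0 < eps -> exists p, valid p /\ d x (iota p) < eps) /\
  (forall u, cauchy d u -> exists x, converges d u x).

(* compactness (sequential, equivalent to compactness for metric spaces) *)
Definition compact_space {X : Type} (d : X -> X -> R) : Prop :=
  forall u : nat -> X, exists (phi : nat -> nat) (x : X),
    (forall n, (phi n < phi (S n))%nat) /\ converges d (fun n => u (phi n)) x.

(* boundary  dG = Gbar \ G_int *)
Definition in_bd {G : MGraph} {X : Type} (iota : gpt G -> X) (x : X) : Prop :=
  ~ (exists p, valid p /\ interior_pt p /\ x = iota p).

Definition metric_open {X : Type} (d : X -> X -> R) (U : X -> Prop) : Prop :=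
  forall x, U x -> exists r, 0 < r /\ forall y, d x y < r -> U y.

Definition connected_set {X : Type} (d : X -> X -> R) (S : X -> Prop) : Prop :=
  forall U W, metric_open d U -> metric_open d W ->
    (forall x, S x -> U x \/ W x) -> (forall x, ~ (S x /\ U x /\ W x)) ->
    (forall x, S x -> U x) \/ (forall x, S x -> W x).

Definition totally_disconnected {X : Type} (d : X -> X -> R) (B : X -> Prop) : Prop :=
  forall S, (forall x, S x -> B x) -> connected_set d S ->
    forall x y, S x -> S y -> x = y.

Definition rel_open {X : Type} (d : X -> X -> R) (B A : X -> Prop) : Prop :=
  forall x, A x -> exists r, 0 < r /\ forall y, B y -> d x y < r -> A y.

Definition clopen_in {X : Type} (d : X -> X -> R) (B A : X -> Prop) : Prop :=
  (forall x, A x -> B x) /\ rel_open d B A /\ rel_open d B (fun x => B x /\ ~ A x).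

Definition continuous_on_space {X : Type} (d : X -> X -> R) (f : X -> R) : Prop :=
  forall x eps, 0 < eps -> exists delta, 0 < delta /\
    forall y, d x y < delta -> Rabs (f y - f x) < eps.

Definition slope {G : MGraph} {X : Type} (iota : gpt G -> X) (f : X -> R)
  (e : Ed G) : R :=
  (f (iota (GV (tgt e))) - f (iota (GV (src e)))) / len e.

Definition linear_on_edges {G : MGraph} {X : Type} (iota : gpt G -> X)
  (f : X -> R) : Prop :=
  forall e s, 0 < s < len e ->
    f (iota (GE e s)) = f (iota (GV (src e))) + slope iota f e * s.

Definition decP (P : Prop) : bool :=
  if excluded_middle_informative P then true else false.

(* sum over the ends of e at v of the derivative of f_e at v pointing into e *)
Definition out_deriv {G : MGraph} {X : Type} (iota : gpt G -> X) (f : X -> R)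
  (v : V G) (e : Ed G) : R :=
  (if decP (src e = v) then slope iota f e else 0) +
  (if decP (tgt e = v) then - slope iota f e else 0).

Definition sumR {A : Type} (g : A -> R) (l : list A) : R :=
  fold_right (fun a acc => g a + acc) 0 l.

Definition harmonic {G : MGraph} {X : Type} (d : X -> X -> R)
  (iota : gpt G -> X) (f : X -> R) : Prop :=
  continuous_on_space d f /\ linear_on_edges iota f /\
  forall v : V G, ~ bdry v ->
    forall l : list (Ed G), NoDup l -> (forall e, In e l <-> incident e v) ->
      sumR (out_deriv iota f v) l = 0.

Definition critical_pt {G : MGraph} {X : Type} (iota : gpt G -> X) (f : X -> R)
  (p : gpt G) : Prop :=
  match p with GV _ => True | GE e _ => slope iota f e = 0 end.

Definition regular_value {G : MGraph} {X : Type} (iota : gpt G -> X)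
  (f : X -> R) (t : R) : Prop :=
  (exists x, f x = t) /\
  (forall p, valid p -> critical_pt iota f p -> f (iota p) <> t).

(* derivative of f at p (a point of f^{-1}(t) interior to an edge), along the
   edge of G_t = {f >= t} incident on p, pointing from p into that edge *)
Definition nu_deriv {G : MGraph} {X : Type} (iota : gpt G -> X) (f : X -> R)
  (t : R) (p : gpt G) : R :=
  match p with
  | GV _ => 0
  | GE e s =>
      if decP (exists h, 0 < h /\ forall h', 0 < h' < h -> t <= f (iota (GE e (s + h'))))
      then slope iota f e else - slope iota f e
  end.

Definition enumerates_level {G : MGraph} {X : Type} (iota : gpt G -> X)
  (f : X -> R) (t : R) (L : list (gpt G)) : Prop :=
  NoDup L /\ forall p, In p L <-> (valid p /\ f (iota p) = t).

From Stdlib Require Import Reals List.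
From Stdlib Require Import Lra Lia Permutation Classical ClassicalEpsilon FinFun.
Open Scope R_scope.

(* The band {t2 <= f <= t1} is compact and misses the boundary, since f = C < t2 on E
   and f > t1 on its complement; as every point of the graph has a neighbourhood
   meeting finitely many vertices and edges, the band meets only finitely many of them.
   Summing Kirchhoff's law over the vertices strictly inside the band, an edge with
   slope f' contributes |f'| if it crosses the level t1 and -|f'| if it crosses t2
   (an edge with both ends inside contributes f' - f' = 0).  At a regular value each
   point of the level set is interior to a crossing edge, where the inward derivative
   of {f >= t} is |f'|, so the two sums are the two fluxes. *)

Lemma decP_true (P : Prop) : P -> decP P = true.
Proof. unfold decP; destruct (excluded_middle_informative P); tauto. Qed.

Lemma decP_false (P : Prop) : ~ P -> decP P = false.
Proof. unfold decP; destruct (excluded_middle_informative P); tauto. Qed.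

Lemma decP_ext (P Q : Prop) : (P <-> Q) -> decP P = decP Q.
Proof.
  intros HPQ; destruct (classic P).
  - rewrite !decP_true; tauto.
  - rewrite !decP_false; tauto.
Qed.

Section SumR.
Context {A : Type}.
Implicit Types (g h : A -> R) (l : list A).

Lemma sumR_ext g h l : (forall x, In x l -> g x = h x) -> sumR g l = sumR h l.
Proof. induction l; simpl; intros H; auto. rewrite H, IHl; auto. Qed.

Lemma sumR_plus g h l : sumR (fun x => g x + h x) l = sumR g l + sumR h l.
Proof. induction l; simpl; lra. Qed.

Lemma sumR_opp g l : sumR (fun x => - g x) l = - sumR g l.
Proof. induction l; simpl; lra. Qed.

Lemma sumR_eq0 g l : (forall x, In x l -> g x = 0) -> sumR g l = 0.
Proof. induction l; simpl; intros H; auto. rewrite H, IHl; auto; lra. Qed.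

Lemma sumR_filter g (b : A -> bool) l :
  sumR g (filter b l) = sumR (fun x => if b x then g x else 0) l.
Proof. induction l as [|a l IH]; simpl; auto. destruct (b a); simpl; rewrite IH; lra. Qed.

Lemma sumR_perm g l l' : Permutation l l' -> sumR g l = sumR g l'.
Proof. induction 1; simpl; lra. Qed.

Lemma sumR_delta (a : A) (c : R) l : NoDup l ->
  sumR (fun x => if decP (a = x) then c else 0) l = if decP (In a l) then c else 0.
Proof.
  induction l as [|b l IH]; simpl; intros Hl.
  - rewrite decP_false; auto.
  - inversion Hl; subst. rewrite IH by auto.
    destruct (classic (a = b)) as [<-|Hab].
    + rewrite (decP_true (a = a)), (decP_true (a = a \/ In a l)), (decP_false (In a l));
        auto. lra.
    + rewrite (decP_false (a = b)) by auto.
      rewrite (decP_ext (In a l) (b = a \/ In a l))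
        by (split; [tauto | intros [->|?]; [congruence|auto]]).
      lra.
Qed.

Lemma sumR_incl g l1 l2 : NoDup l1 -> NoDup l2 -> incl l1 l2 ->
  (forall x, In x l2 -> ~ In x l1 -> g x = 0) -> sumR g l1 = sumR g l2.
Proof.
  intros N1 N2 H12 Hg.
  transitivity (sumR g (filter (fun x => decP (In x l1)) l2)).
  - apply sumR_perm, NoDup_Permutation; [auto | apply NoDup_filter; auto |].
    intro x; rewrite filter_In; split.
    + intro Hx; split; auto; apply decP_true; auto.
    + intros [_ Hx]. apply NNPP; intro Hn. rewrite decP_false in Hx; auto; discriminate.
  - rewrite sumR_filter. apply sumR_ext; intros x Hx.
    destruct (classic (In x l1)).
    + rewrite decP_true; auto.
    + rewrite decP_false, Hg; auto.
Qed.

End SumR.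

Lemma sumR_map {A B : Type} (g : B -> R) (h : A -> B) l :
  sumR g (map h l) = sumR (fun x => g (h x)) l.
Proof. induction l; simpl; auto. rewrite IHl; auto. Qed.

Lemma sumR_swap {A B : Type} (h : A -> B -> R) la lb :
  sumR (fun a => sumR (h a) lb) la = sumR (fun b => sumR (fun a => h a b) la) lb.
Proof.
  induction la as [|a la IH]; simpl.
  - symmetry; apply sumR_eq0; auto.
  - rewrite IH, <- sumR_plus. reflexivity.
Qed.

Lemma covered_NoDup_enum {T : Type} (l : list T) (P : T -> Prop) :
  (forall x, P x -> In x l) -> exists L, NoDup L /\ forall x, In x L <-> P x.
Proof.
  intros Hl.
  set (eq_dec := fun x y : T => excluded_middle_informative (x = y)).
  exists (filter (fun x => decP (P x)) (nodup eq_dec l)); split.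
  - apply NoDup_filter, NoDup_nodup.
  - intro x; rewrite filter_In, nodup_In; split.
    + intros [_ Hx]. apply NNPP; intro Hn. rewrite decP_false in Hx; auto; discriminate.
    + intro Hx; split; auto; apply decP_true; auto.
Qed.

Lemma strict_mono_lt (phi : nat -> nat) : (forall n, (phi n < phi (S n))%nat) ->
  forall m n, (m < n)%nat -> (phi m < phi n)%nat.
Proof. intros Hphi m n Hmn. induction Hmn; [apply Hphi | specialize (Hphi m0); lia]. Qed.

Lemma injective_seq_not_in_list {K : Type} (g : nat -> K) (L : list K) :
  (forall i j, g i = g j -> i = j) -> ~ (forall i, In (g i) L).
Proof.
  intros Hg HL.
  assert (Hnd : NoDup (map g (seq 0 (S (length L))))).
  { apply Injective_map_NoDup; [exact Hg | apply seq_NoDup]. }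
  apply NoDup_incl_length with (l' := L) in Hnd.
  - rewrite length_map, length_seq in Hnd. lia.
  - intros k Hk. apply in_map_iff in Hk. destruct Hk as [i [<- _]]. apply HL.
Qed.

(* Each new term is chosen outside the keys of all the previous ones. *)
Lemma not_covered_distinct_seq {A K : Type} (key : A -> K) (P : A -> Prop) :
  ~ (exists l, forall a, P a -> In (key a) l) ->
  exists u : nat -> A, (forall n, P (u n)) /\ (forall m n, key (u m) = key (u n) -> m = n).
Proof.
  intros Hno.
  assert (Hnext : forall l, exists a, P a /\ ~ In (key a) l).
  { intro l. apply NNPP; intro H. apply Hno. exists l. intros a Ha.
    apply NNPP; intro Hn. apply H. exists a; auto. }
  destruct (choice _ Hnext) as [next Hn].
  set (ls := fix ls n := match n with O => nil | S n => key (next (ls n)) :: ls n end).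
  exists (fun n => next (ls n)); split; [intro n; apply Hn|].
  assert (Hin : forall m n, (m < n)%nat -> In (key (next (ls m))) (ls n)).
  { intros m n Hmn. induction Hmn; simpl; auto. }
  intros m n Hkey. destruct (Nat.lt_total m n) as [H|[H|H]]; auto; exfalso.
  - apply (proj2 (Hn (ls n))). rewrite <- Hkey. auto.
  - apply (proj2 (Hn (ls m))). rewrite Hkey. auto.
Qed.

Lemma continuous_limit_close {X : Type} (d : X -> X -> R) (f : X -> R) (u : nat -> X) x :
  (forall x y, d x y = d y x) -> continuous_on_space d f -> converges d u x ->
  forall e, 0 < e -> exists n, Rabs (f (u n) - f x) < e.
Proof.
  intros Hsym Hf Hu e He.
  destruct (Hf x e He) as [delta [Hdelta Hclose]].
  destruct (Hu delta Hdelta) as [N HN].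
  exists N. apply Hclose. rewrite Hsym. apply HN. lia.
Qed.

Lemma continuous_band_limit {X : Type} (d : X -> X -> R) (f : X -> R) (u : nat -> X) x t2 t1 :
  (forall x y, d x y = d y x) -> continuous_on_space d f -> converges d u x ->
  (forall n, t2 <= f (u n) <= t1) -> t2 <= f x <= t1.
Proof.
  intros Hsym Hf Hu Hband.
  split; apply Rnot_lt_le; intro Hout.
  - destruct (continuous_limit_close d f u x Hsym Hf Hu (t2 - f x)) as [n Hn]; [lra|].
    apply Rabs_def2 in Hn. specialize (Hband n). lra.
  - destruct (continuous_limit_close d f u x Hsym Hf Hu (f x - t1)) as [n Hn]; [lra|].
    apply Rabs_def2 in Hn. specialize (Hband n). lra.
Qed.

(* Otherwise infinitely many distinct keys accumulate at a point of the band, whose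
   neighbourhood sees only finitely many of them. *)
Lemma compact_band_covered {X A K : Type} (d : X -> X -> R) (f : X -> R) (pt : A -> X)
  (key : A -> K) (P : A -> Prop) (t2 t1 : R) :
  (forall x y, d x y = d y x) -> compact_space d -> continuous_on_space d f ->
  (forall a, P a -> t2 <= f (pt a) <= t1) ->
  (forall x, t2 <= f x <= t1 -> exists r, 0 < r /\ exists L,
      forall a, P a -> d x (pt a) < r -> In (key a) L) ->
  exists l, forall a, P a -> In (key a) l.
Proof.
  intros Hsym Hcpt Hf HP Hloc.
  apply NNPP; intro Hno.
  destruct (not_covered_distinct_seq key P Hno) as [u [Hu Hdist]].
  destruct (Hcpt (fun n => pt (u n))) as [phi [x [Hphi Hcv]]].
  assert (Hx : t2 <= f x <= t1).
  { apply (continuous_band_limit d f _ x t2 t1 Hsym Hf Hcv). intro n; apply HP, Hu. }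
  destruct (Hloc x Hx) as [r [Hr [L HL]]].
  destruct (Hcv r Hr) as [N HN].
  apply (injective_seq_not_in_list (fun i => key (u (phi (N + i)%nat))) L).
  - intros i j Hij. apply Hdist in Hij.
    destruct (Nat.lt_total i j) as [H|[H|H]]; auto;
      [ pose proof (strict_mono_lt phi Hphi (N + i) (N + j))
      | pose proof (strict_mono_lt phi Hphi (N + j) (N + i)) ]; lia.
  - intro i. apply HL; [apply Hu|]. rewrite Hsym. apply HN. lia.
Qed.

Lemma list_pos_lower_bound {A : Type} (g : A -> R) (l : list A) :
  (forall x, 0 < g x) -> exists m, 0 < m /\ forall x, In x l -> m <= g x.
Proof.
  intros Hg. induction l as [|a l [m [Hm Hl]]].
  - exists 1; split; [lra | intros x []].
  - exists (Rmin m (g a)); split; [apply Rmin_pos; auto|].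
    intros x [<-|Hx]; [apply Rmin_r | eapply Rle_trans; [apply Rmin_l | auto]].
Qed.

Section PathLengths.
Context {G : MGraph}.
Hypothesis len_pos : forall e : Ed G, 0 < len e.

Lemma walk_len_nonneg (l : list (Ed G)) : 0 <= @walk_len G l.
Proof. induction l as [|e l IH]; simpl; [lra | specialize (len_pos e); lra]. Qed.

Lemma walk_len_ge_first_edge u z l dl : walk u z l -> u <> z ->
  (forall e, incident e u -> dl <= len e) -> dl <= @walk_len G l.
Proof.
  intros Hw Huz Hdl. inversion Hw as [|? ? ? e l' Hend _]; subst; [congruence|].
  simpl. pose proof (walk_len_nonneg l').
  assert (dl <= len e); [|lra].
  apply Hdl. red. destruct Hend as [[? ?]|[? ?]]; auto.
Qed.

Lemma anchors_nonneg (q : gpt G) w b : valid q -> In (w, b) (anchors q) -> 0 <= b.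
Proof.
  destruct q; simpl; intros Hq Hin.
  - destruct Hin as [H|[]]; inversion H; lra.
  - destruct Hin as [H|[H|[]]]; inversion H; lra.
Qed.

Lemma path_lengths_from_edge_ge e' s' (q : gpt G) r : 0 < s' < len e' -> valid q ->
  (forall s, q <> GE e' s) -> path_lengths (GE e' s') q r -> Rmin s' (len e' - s') <= r.
Proof.
  intros Hs Hq Hoff [[u [a [w [b [l [Ha [Hb [Hw ->]]]]]]]] | [e [s [s2 [He [Hq' _]]]]]].
  - pose proof (anchors_nonneg q w b Hq Hb). pose proof (walk_len_nonneg l).
    simpl in Ha. destruct Ha as [Ha|[Ha|[]]]; injection Ha; intros; subst u a.
    + pose proof (Rmin_l s' (len e' - s')); lra.
    + pose proof (Rmin_r s' (len e' - s')); lra.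
  - injection He; intros; subst. exfalso; apply (Hoff s2); auto.
Qed.

Lemma path_lengths_from_vertex_ge w dl (q : gpt G) r :
  (forall e, incident e w -> dl <= len e) -> valid q ->
  (forall w' b, In (w', b) (anchors q) -> w' <> w) -> path_lengths (GV w) q r -> dl <= r.
Proof.
  intros Hdl Hq Hoff [[u [a [w2 [b [l [Ha [Hb [Hw ->]]]]]]]] | [e [s [s2 [He _]]]]].
  - pose proof (anchors_nonneg q w2 b Hq Hb).
    simpl in Ha. destruct Ha as [Ha|[]]; injection Ha; intros; subst.
    pose proof (walk_len_ge_first_edge u w2 l dl Hw (fun E => Hoff _ _ Hb (eq_sym E)) Hdl).
    lra.
  - discriminate.
Qed.

End PathLengths.

Definition lies_in {G : MGraph} (lv : list (V G)) (le : list (Ed G)) (q : gpt G) : Prop :=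
  match q with GV u => In u lv | GE e _ => In e le end.

Lemma not_bd_is_point {G : MGraph} {X : Type} (iota : gpt G -> X) x :
  ~ in_bd iota x -> exists p, valid p /\ x = iota p.
Proof.
  intros Hx. apply NNPP; intros Hno. apply Hx. intros [p [Hp [_ ->]]]. apply Hno; eauto.
Qed.

Lemma wf_len_pos {G : MGraph} : wf_graph G -> forall e : Ed G, 0 < len e.
Proof. intros wf; apply wf. Qed.

Lemma wf_locally_finite {G : MGraph} : wf_graph G ->
  forall v : V G, exists l, forall e, incident e v -> In e l.
Proof. intros wf; apply wf. Qed.

Section GeodesicBalls.
Context {G : MGraph} {X : Type} (d : X -> X -> R) (iota : gpt G -> X).
Hypothesis wf : wf_graph G.
Hypothesis completion : is_completion d iota.

Lemma completion_sym : forall x y, d x y = d y x.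
Proof. apply completion. Qed.

Lemma near_vertex w : exists r, 0 < r /\ forall q, valid q -> d (iota (GV w)) (iota q) < r ->
  q = GV w \/ exists e s, q = GE e s /\ incident e w.
Proof.
  destruct completion as [_ [geod _]].
  destruct (wf_locally_finite wf w) as [lw Hlw].
  destruct (list_pos_lower_bound len lw (wf_len_pos wf)) as [dl [Hdl Hlw_dl]].
  exists dl; split; auto. intros q Hq Hclose.
  apply NNPP; intro Hfar.
  assert (dl <= d (iota (GV w)) (iota q)); [|lra].
  apply (proj2 (geod (GV w) q I Hq)). intros r Hr.
  apply (path_lengths_from_vertex_ge (wf_len_pos wf) w dl q r); auto.
  intros w' b Hin ->. apply Hfar. destruct q as [u|e s]; simpl in Hin.
  - destruct Hin as [H|[]]; injection H; intros; subst; auto.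
  - right; exists e, s; split; auto.
    destruct Hin as [H|[H|[]]]; injection H; intros; subst; red; auto.
Qed.

Lemma near_edge_point e' s' : 0 < s' < len e' ->
  exists r, 0 < r /\ forall q, valid q -> d (iota (GE e' s')) (iota q) < r ->
  exists s, q = GE e' s.
Proof.
  destruct completion as [_ [geod _]].
  intros Hs. exists (Rmin s' (len e' - s')); split; [apply Rmin_pos; lra|].
  intros q Hq Hclose. apply NNPP; intro Hfar.
  assert (Rmin s' (len e' - s') <= d (iota (GE e' s')) (iota q)); [|lra].
  apply (proj2 (geod (GE e' s') q Hs Hq)). intros r Hr.
  apply (path_lengths_from_edge_ge (wf_len_pos wf) e' s' q r); eauto.
Qed.

Lemma geod_ball_finite p : valid p -> exists r, 0 < r /\ exists lv le,
  forall q, valid q -> d (iota p) (iota q) < r -> lies_in lv le q.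
Proof.
  destruct p as [w|e' s']; intros Hp.
  - destruct (near_vertex w) as [r [Hr Hnear]].
    destruct (wf_locally_finite wf w) as [lw Hlw].
    exists r; split; auto. exists (w :: nil), lw. intros q Hq Hclose.
    destruct (Hnear q Hq Hclose) as [->|[e [s [-> He]]]]; simpl; auto.
  - destruct (near_edge_point e' s' Hp) as [r [Hr Hnear]].
    exists r; split; auto. exists nil, (e' :: nil). intros q Hq Hclose.
    destruct (Hnear q Hq Hclose) as [s ->]; simpl; auto.
Qed.

Lemma iota_GV_inj v p : valid p -> iota (GV v) = iota p -> p = GV v.
Proof.
  intros Hp Heq.
  assert (Hdist : forall q, d (iota q) (iota q) = 0) by (intro; apply completion; auto).
  destruct (near_vertex v) as [r [Hr Hnear]].
  destruct (Hnear p Hp) as [->|[e [s [-> _]]]]; [rewrite <- Heq, Hdist; auto | auto |].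
  destruct (near_edge_point e s Hp) as [r' [Hr' Hnear']].
  destruct (Hnear' (GV v) I) as [s' Hs']; [rewrite <- Heq, Hdist; auto | discriminate].
Qed.

Lemma bdry_vertex_in_bd v : bdry v -> in_bd iota (iota (GV v)).
Proof.
  intros Hv [p [Hp [Hint Heq]]].
  rewrite (iota_GV_inj v p Hp Heq) in Hint. contradiction.
Qed.

End GeodesicBalls.

Lemma linear_crosses_iff a b L t : 0 < L -> a <> t -> b <> t ->
  (exists s, 0 < s < L /\ a + (b - a) / L * s = t) <-> (a < t < b \/ b < t < a).
Proof.
  intros HL Ha Hb. split.
  - intros [s [Hs Heq]]. set (lam := s / L).
    assert (Hlam : 0 < lam < 1).
    { unfold lam; split; [apply Rdiv_lt_0_compat; lra|].
      apply (Rmult_lt_reg_r L); auto. unfold Rdiv; rewrite Rmult_assoc, Rinv_l; lra. }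
    assert (Ht : t = a + (b - a) * lam) by (rewrite <- Heq; unfold lam; field; lra).
    destruct (Rtotal_order a b) as [?|[?|?]]; [left | subst; lra | right]; split; nra.
  - intros Hab. exists ((t - a) * L / (b - a)).
    assert (b - a <> 0) by (destruct Hab; lra).
    split; [|field; split; lra].
    destruct Hab as [[? ?]|[? ?]].
    + split; [apply Rdiv_lt_0_compat; nra|].
      apply (Rmult_lt_reg_r (b - a)); [lra|]. unfold Rdiv; rewrite Rmult_assoc, Rinv_l; nra.
    + replace ((t - a) * L / (b - a)) with ((a - t) * L / (a - b)) by (field; split; lra).
      split; [apply Rdiv_lt_0_compat; nra|].
      apply (Rmult_lt_reg_r (a - b)); [lra|]. unfold Rdiv; rewrite Rmult_assoc, Rinv_l; nra.
Qed.

Lemma linear_step_in_band a k L t2 t1 : 0 < L -> t2 < a < t1 ->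
  exists s, 0 < s < L /\ t2 <= a + k * s <= t1.
Proof.
  intros HL Ha.
  pose proof (Rmin_l (a - t2) (t1 - a)). pose proof (Rmin_r (a - t2) (t1 - a)).
  set (m := Rmin (a - t2) (t1 - a)) in *.
  assert (Hm : 0 < m) by (apply Rmin_pos; lra).
  pose proof (Rabs_pos k).
  set (s := Rmin (L / 2) (m / (Rabs k + 1))).
  assert (Hs : 0 < s) by (apply Rmin_pos; [lra | apply Rdiv_lt_0_compat; lra]).
  assert (s <= L / 2) by apply Rmin_l.
  assert (Hsk : s * (Rabs k + 1) <= m).
  { assert (Hsm : s <= m / (Rabs k + 1)) by apply Rmin_r.
    apply Rmult_le_compat_r with (r := Rabs k + 1) in Hsm; [|lra].
    unfold Rdiv in Hsm; rewrite Rmult_assoc, Rinv_l in Hsm; lra. }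
  assert (Hks : Rabs (k * s) < m) by (rewrite Rabs_mult, (Rabs_pos_eq s); nra).
  apply Rabs_def2 in Hks. exists s; split; lra.
Qed.

(* a and b are the values of f at the ends of an edge of slope sl; the left-hand side
   is the contribution of the edge to Kirchhoff's law summed over the band vertices. *)
Lemma endpoint_band_balance a b L t1 t2 sl : 0 < L -> sl = (b - a) / L -> t2 < t1 ->
  a <> t1 -> a <> t2 -> b <> t1 -> b <> t2 ->
  (if decP (t2 < a < t1) then sl else 0) + (if decP (t2 < b < t1) then - sl else 0) =
  (if decP (a < t1 < b \/ b < t1 < a) then Rabs sl else 0) -
  (if decP (a < t2 < b \/ b < t2 < a) then Rabs sl else 0).
Proof.
  intros HL Hsl Ht H1 H2 H3 H4.
  assert (Hpos : a < b -> 0 < sl) by (intro; subst; apply Rdiv_lt_0_compat; lra).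
  assert (Hneg : b < a -> sl < 0).
  { intro; subst. unfold Rdiv. apply Rmult_neg_pos; [lra | apply Rinv_0_lt_compat; lra]. }
  assert (Hzero : a = b -> sl = 0) by (intro; subst; unfold Rdiv; rewrite Rminus_diag; ring).
  destruct (Rtotal_order a b) as [Hab|[Hab|Hab]];
  [ rewrite (Rabs_pos_eq sl) by (specialize (Hpos Hab); lra)
  | specialize (Hzero Hab)
  | rewrite (Rabs_left sl) by auto];
  destruct (Rtotal_order a t2) as [?|[?|?]]; try congruence;
  destruct (Rtotal_order a t1) as [?|[?|?]]; try congruence;
  destruct (Rtotal_order b t2) as [?|[?|?]]; try congruence;
  destruct (Rtotal_order b t1) as [?|[?|?]]; try congruence;
  repeat match goal with
  | |- context [decP ?P] =>
      first [ rewrite (decP_true P) by (first [split; lra | left; split; lra | right; split; lra])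
            | rewrite (decP_false P) by (intros [? ?] || intros [[? ?]|[? ?]]; lra) ]
  end; lra.
Qed.

Section Band.
Context {G : MGraph} {X : Type} (d : X -> X -> R) (iota : gpt G -> X) (f : X -> R).
Hypothesis wf : wf_graph G.
Hypothesis completion : is_completion d iota.
Hypothesis compact : compact_space d.
Hypothesis f_cont : continuous_on_space d f.
Variables t2 t1 : R.
Hypothesis band_off_bd : forall x, in_bd iota x -> ~ (t2 <= f x <= t1).

Lemma band_locally_finite x : t2 <= f x <= t1 -> exists r, 0 < r /\ exists lv le,
  forall q, valid q -> d x (iota q) < r -> lies_in lv le q.
Proof.
  intros Hx. destruct (not_bd_is_point iota x) as [p [Hp ->]].
  - intro Hbd. exact (band_off_bd _ Hbd Hx).
  - exact (geod_ball_finite d iota wf completion p Hp).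
Qed.

Lemma band_vertices_covered :
  exists lv, forall v, t2 <= f (iota (GV v)) <= t1 -> In v lv.
Proof.
  apply (compact_band_covered d f (fun v => iota (GV v)) (fun v => v) _ t2 t1
    (completion_sym d iota completion) compact f_cont); auto.
  intros x Hx. destruct (band_locally_finite x Hx) as [r [Hr [lv [le Hball]]]].
  exists r; split; auto. exists lv. intros v _ Hv. exact (Hball (GV v) I Hv).
Qed.

Lemma band_edges_covered : exists le, forall e s, 0 < s < len e ->
  t2 <= f (iota (GE e s)) <= t1 -> In e le.
Proof.
  destruct (compact_band_covered d f (fun a => iota (GE (fst a) (snd a))) fst
    (fun a => 0 < snd a < len (fst a) /\ t2 <= f (iota (GE (fst a) (snd a))) <= t1)
    t2 t1 (completion_sym d iota completion) compact f_cont) as [le Hle].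
  - intros a [_ Ha]; exact Ha.
  - intros x Hx. destruct (band_locally_finite x Hx) as [r [Hr [lv [le Hball]]]].
    exists r; split; auto. exists le. intros [e s] [Hs _] Hclose. exact (Hball (GE e s) Hs Hclose).
  - exists le. intros e s Hs Hband. exact (Hle (e, s) (conj Hs Hband)).
Qed.

End Band.

Section LevelSets.
Context {G : MGraph} {X : Type} (iota : gpt G -> X) (f : X -> R).
Hypothesis len_pos : forall e : Ed G, 0 < len e.
Hypothesis f_lin : linear_on_edges iota f.

Definition crosses (t : R) (e : Ed G) : Prop :=
  f (iota (GV (src e))) < t < f (iota (GV (tgt e))) \/
  f (iota (GV (tgt e))) < t < f (iota (GV (src e))).

Definition crossing_flux (t : R) (e : Ed G) : R :=
  if decP (crosses t e) then Rabs (slope iota f e) else 0.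

Definition level_point (t : R) (e : Ed G) : gpt G :=
  GE e ((t - f (iota (GV (src e)))) / slope iota f e).

Lemma regular_value_not_vertex t v : regular_value iota f t -> f (iota (GV v)) <> t.
Proof. intros [_ Hreg]. exact (Hreg (GV v) I I). Qed.

Lemma regular_level_point t e s : regular_value iota f t -> 0 < s < len e ->
  f (iota (GE e s)) = t -> slope iota f e <> 0 /\ GE e s = level_point t e.
Proof.
  intros [_ Hreg] Hs Ht.
  assert (Hsl : slope iota f e <> 0) by (intro Hz; exact (Hreg (GE e s) Hs Hz Ht)).
  split; auto. unfold level_point. rewrite <- Ht, f_lin by auto. f_equal. field; auto.
Qed.

Lemma level_crossing_iff t e : regular_value iota f t ->
  (exists s, 0 < s < len e /\ f (iota (GE e s)) = t) <-> crosses t e.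
Proof.
  intros Hreg. unfold crosses.
  rewrite <- (linear_crosses_iff _ _ (len e)) by (auto; apply regular_value_not_vertex; auto).
  split; intros [s [Hs Ht]]; exists s; split; auto;
    [rewrite <- Ht, f_lin | rewrite f_lin]; auto.
Qed.

Lemma nu_deriv_level_point t e s : 0 < s < len e -> f (iota (GE e s)) = t ->
  slope iota f e <> 0 -> nu_deriv iota f t (GE e s) = Rabs (slope iota f e).
Proof.
  intros Hs Ht Hsl. simpl.
  set (sl := slope iota f e) in *.
  assert (Hf : forall h, 0 < h < len e - s -> f (iota (GE e (s + h))) = t + sl * h).
  { intros h Hh. rewrite <- Ht, !f_lin by lra. unfold sl. ring. }
  destruct (Rtotal_order sl 0) as [Hn|[Hz|Hp]]; [|contradiction|].
  - rewrite Rabs_left by auto. rewrite decP_false; [reflexivity|].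
    intros [h [Hh Habove]].
    pose proof (Rmin_l h (len e - s)). pose proof (Rmin_r h (len e - s)).
    assert (0 < Rmin h (len e - s)) by (apply Rmin_pos; lra).
    specialize (Habove (Rmin h (len e - s) / 2)).
    rewrite Hf in Habove by lra.
    assert (t <= t + sl * (Rmin h (len e - s) / 2)) by (apply Habove; lra).
    nra.
  - rewrite Rabs_right by lra. rewrite decP_true; [reflexivity|].
    exists (len e - s); split; [lra|]. intros h Hh. rewrite Hf by lra. nra.
Qed.

Lemma level_enumerable t le : regular_value iota f t ->
  (forall e s, 0 < s < len e -> f (iota (GE e s)) = t -> In e le) ->
  exists L, enumerates_level iota f t L.
Proof.
  intros Hreg Hle.
  destruct (covered_NoDup_enum (map (level_point t) le) (fun p => valid p /\ f (iota p) = t))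
    as [L [HN HL]]; [|exists L; split; auto].
  intros [v|e s] [Hp Ht]; [exfalso; exact (regular_value_not_vertex t v Hreg Ht)|].
  apply in_map_iff. exists e. split; [|eauto].
  symmetry; apply (regular_level_point t e s); auto.
Qed.

(* At a regular value the level set consists of one point on each crossing edge,
   where the inward derivative of {f >= t} is |f'|. *)
Lemma level_flux_sum t L le : regular_value iota f t -> enumerates_level iota f t L ->
  NoDup le -> (forall e, crosses t e -> In e le) ->
  sumR (nu_deriv iota f t) L = sumR (crossing_flux t) le.
Proof.
  intros Hreg [HN HL] Hle_nd Hle.
  set (crossing := filter (fun e => decP (crosses t e)) le).
  assert (Hcrossing : forall e, In e crossing <-> crosses t e).
  { intro e. unfold crossing. rewrite filter_In. split.
    - intros [_ He]. apply NNPP; intro Hn. rewrite decP_false in He; auto; discriminate.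
    - intro He. split; auto. apply decP_true; auto. }
  assert (Hperm : Permutation L (map (level_point t) crossing)).
  { apply NoDup_Permutation; auto.
    - apply Injective_map_NoDup; [intros e e' H; injection H; auto | apply NoDup_filter; auto].
    - intro p. rewrite HL, in_map_iff. split.
      + intros [Hp Ht].
        destruct p as [v|e s]; [exfalso; exact (regular_value_not_vertex t v Hreg Ht)|].
        exists e. split; [symmetry; apply (regular_level_point t e s); auto|].
        apply Hcrossing, level_crossing_iff; eauto.
      + intros [e [<- He]]. apply Hcrossing, level_crossing_iff in He as [s [Hs Ht]]; auto.
        rewrite <- (proj2 (regular_level_point t e s Hreg Hs Ht)). auto. }
  rewrite (sumR_perm _ _ _ Hperm), sumR_map. unfold crossing. rewrite sumR_filter.
  apply sumR_ext. intros e _. unfold crossing_flux.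
  destruct (classic (crosses t e)) as [He|He]; [|rewrite !decP_false; auto].
  rewrite !decP_true by auto.
  apply level_crossing_iff in He as [s [Hs Ht]]; auto.
  destruct (regular_level_point t e s Hreg Hs Ht) as [Hsl <-].
  apply nu_deriv_level_point; auto.
Qed.

Lemma incident_edge_meets_band v e t2 t1 : t2 < f (iota (GV v)) < t1 -> incident e v ->
  exists s, 0 < s < len e /\ t2 <= f (iota (GE e s)) <= t1.
Proof.
  intros Hv [<-|<-].
  - destruct (linear_step_in_band _ (slope iota f e) _ _ _ (len_pos e) Hv) as [s [Hs Hband]].
    exists s. rewrite f_lin; auto.
  - destruct (linear_step_in_band _ (- slope iota f e) _ _ _ (len_pos e) Hv) as [s [Hs Hband]].
    exists (len e - s). rewrite f_lin by lra. split; [lra|].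
    replace (f (iota (GV (src e))) + slope iota f e * (len e - s))
      with (f (iota (GV (tgt e))) + - slope iota f e * s); auto.
    unfold slope. field. specialize (len_pos e). lra.
Qed.

Lemma out_deriv_not_incident v e : ~ incident e v -> out_deriv iota f v e = 0.
Proof. intros He. unfold out_deriv. rewrite !decP_false by (intro; apply He; red; auto). lra. Qed.

Lemma band_vertices_out_deriv t1 t2 Wl e : t2 < t1 ->
  regular_value iota f t1 -> regular_value iota f t2 ->
  NoDup Wl -> (forall v, In v Wl <-> t2 < f (iota (GV v)) < t1) ->
  sumR (fun v => out_deriv iota f v e) Wl = crossing_flux t1 e - crossing_flux t2 e.
Proof.
  intros Ht Hreg1 Hreg2 HN HW. unfold out_deriv. rewrite sumR_plus.
  rewrite (sumR_delta (src e)), (sumR_delta (tgt e)) by auto.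
  rewrite !(decP_ext _ _ (HW _)).
  apply (endpoint_band_balance _ _ (len e)); auto; apply regular_value_not_vertex; auto.
Qed.

End LevelSets.

Lemma kirchhoff_on_list {G : MGraph} {X : Type} (d : X -> X -> R) (iota : gpt G -> X) f v le :
  wf_graph G -> harmonic d iota f -> ~ bdry v -> NoDup le ->
  (forall e, incident e v -> In e le) -> sumR (out_deriv iota f v) le = 0.
Proof.
  intros wf [_ [_ kirchhoff]] Hv Hle_nd Hle.
  destruct (wf_locally_finite wf v) as [lw Hlw].
  destruct (covered_NoDup_enum lw (fun e => incident e v) Hlw) as [Iv [HIv_nd HIv]].
  rewrite <- (sumR_incl _ Iv le); auto.
  - intros e He. apply Hle, HIv, He.
  - intros e _ He. apply out_deriv_not_incident. rewrite <- HIv. exact He.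
Qed.

(* Kirchhoff's law summed over the vertices strictly inside the band. *)
Lemma band_flux_balance {G : MGraph} {X : Type} (d : X -> X -> R) (iota : gpt G -> X) f
  t1 t2 lv le :
  wf_graph G -> harmonic d iota f -> t2 < t1 ->
  regular_value iota f t1 -> regular_value iota f t2 ->
  (forall v, bdry v -> ~ (t2 <= f (iota (GV v)) <= t1)) ->
  (forall v, t2 <= f (iota (GV v)) <= t1 -> In v lv) ->
  NoDup le -> (forall e, In e le <-> exists s, 0 < s < len e /\ t2 <= f (iota (GE e s)) <= t1) ->
  sumR (crossing_flux iota f t1) le = sumR (crossing_flux iota f t2) le.
Proof.
  intros wf harm Ht Hreg1 Hreg2 Hbdry Hlv Hle_nd Hle.
  destruct (covered_NoDup_enum lv (fun v => t2 < f (iota (GV v)) < t1)) as [Wl [HW_nd HW]].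
  { intros v Hv. apply Hlv. lra. }
  assert (Hkir : sumR (fun v => sumR (out_deriv iota f v) le) Wl = 0).
  { apply sumR_eq0. intros v Hv. apply HW in Hv.
    apply (kirchhoff_on_list d); auto.
    - intro Hb. apply (Hbdry v Hb). lra.
    - intros e He. apply Hle. apply (incident_edge_meets_band iota f (wf_len_pos wf)) with v; auto.
      apply harm. }
  rewrite sumR_swap in Hkir.
  rewrite (sumR_ext _ (fun e => crossing_flux iota f t1 e + - crossing_flux iota f t2 e)) in Hkir
    by (intros e _; rewrite (band_vertices_out_deriv iota f (wf_len_pos wf) t1 t2 Wl); auto; ring).
  rewrite sumR_plus, sumR_opp in Hkir. lra.
Qed.

Theorem lemma3p12 (G : MGraph) (X : Type) (d : X -> X -> R)
  (iota : gpt G -> X) (f : X -> R) (E : X -> Prop) (C eps t1 t2 : R) :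
  wf_graph G ->
  is_completion d iota ->
  compact_space d ->
  totally_disconnected d (in_bd iota) ->
  clopen_in d (in_bd iota) E ->
  clopen_in d (in_bd iota) (fun x => in_bd iota x /\ ~ E x) ->
  (exists x, E x) ->
  (exists x, in_bd iota x /\ ~ E x) ->
  harmonic d iota f ->
  0 <= C ->
  (forall x, E x -> f x = C) ->
  (forall x, in_bd iota x -> ~ E x -> C < f x) ->
  0 < eps ->
  regular_value iota f t1 ->
  regular_value iota f t2 ->
  C < t2 -> t2 < t1 ->
  (forall x, in_bd iota x -> ~ E x -> t1 < f x) ->
  (forall x, f x <= t1 -> exists y, E y /\ d x y < eps) ->
  (forall x, f x <= t2 -> exists y, E y /\ d x y < eps) ->
  (* G_2 = f^{-1}([t2,t1]) ∩ G is a finite graph ... *)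
  (exists lv : list (V G), forall v, t2 <= f (iota (GV v)) <= t1 -> In v lv) /\
  (exists le : list (Ed G), forall e,
      (exists s, 0 < s < len e /\ t2 <= f (iota (GE e s)) <= t1) -> In e le) /\
  (exists L1, enumerates_level iota f t1 L1) /\
  (exists L2, enumerates_level iota f t2 L2) /\
  (* ... containing no boundary vertex of G ... *)
  (forall v : V G, bdry v -> ~ (t2 <= f (iota (GV v)) <= t1)) /\
  (* ... and the flux identity *)
  (forall L1 L2, enumerates_level iota f t1 L1 -> enumerates_level iota f t2 L2 ->
     sumR (nu_deriv iota f t1) L1 = sumR (nu_deriv iota f t2) L2).
Proof.
  intros wf completion compact _ _ _ _ _ harm _ f_on_E _ _ reg1 reg2 C_t2 t2_t1 t1_off_E _ _.
  pose proof harm as [f_cont [f_lin _]].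
  pose proof (wf_len_pos wf) as len_pos.
  assert (band_off_bd : forall x, in_bd iota x -> ~ (t2 <= f x <= t1)).
  { intros x Hx Hband. destruct (classic (E x)) as [HE|HE].
    - rewrite f_on_E in Hband by auto. lra.
    - specialize (t1_off_E x Hx HE). lra. }
  destruct (band_vertices_covered d iota f wf completion compact f_cont t2 t1 band_off_bd)
    as [lv Hlv].
  destruct (band_edges_covered d iota f wf completion compact f_cont t2 t1 band_off_bd)
    as [le0 Hle0].
  set (meets_band := fun e => exists s, 0 < s < len e /\ t2 <= f (iota (GE e s)) <= t1).
  destruct (covered_NoDup_enum le0 meets_band) as [le [Hle_nd Hle]];
    [intros e [s [Hs Hband]]; eauto|].
  assert (level_enum : forall t, t2 <= t <= t1 -> regular_value iota f t ->
    exists L, enumerates_level iota f t L).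
  { intros t Ht Hreg. apply (level_enumerable iota f f_lin t le0 Hreg).
    intros e s Hs <-. apply (Hle0 e s Hs); lra. }
  assert (flux : forall t L, t2 <= t <= t1 -> regular_value iota f t ->
    enumerates_level iota f t L -> sumR (nu_deriv iota f t) L = sumR (crossing_flux iota f t) le).
  { intros t L Ht Hreg HL. apply (level_flux_sum iota f len_pos f_lin); auto.
    intros e He. apply Hle.
    apply (level_crossing_iff iota f len_pos f_lin t e Hreg) in He as [s [Hs <-]].
    exists s; auto. }
  assert (bdry_off : forall v, bdry v -> ~ (t2 <= f (iota (GV v)) <= t1))
    by (intros v Hv; apply band_off_bd, (bdry_vertex_in_bd d iota wf completion); auto).
  split; [exists lv; exact Hlv|].
  split; [exists le0; intros e [s [Hs Hband]]; eauto|].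
  split; [apply level_enum; auto; lra|].
  split; [apply level_enum; auto; lra|].
  split; [exact bdry_off|].
  intros L1 L2 HL1 HL2.
  rewrite (flux t1 L1), (flux t2 L2) by (auto; lra).
  apply (band_flux_balance d iota f t1 t2 lv le); auto.
Qed.
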